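(* Let $X$ be a stacked simplicial complex of dimension $d$, let $h,k$ be faces of $X$ such that $h\cup k$ is not contained in any codimension one face, and let $h\,|\,f_1,\dots,f_p\,|\,k$ be a path between $h$ and $k$. Then for every $1\le i<p$ we have $h\not\subseteq f_i\cap f_{i+1}$ and $k\not\subseteq f_i\cap f_{i+1}$.
   Context: A simplicial complex $X$ on a finite vertex set $V$ is a family of subsets (faces) of $V$ closed under taking subsets, every element of $V$ lying in some face; facets are inclusion-maximal faces. $X$ is pure of dimension $d$ if every facet has $d+1$ elements; a codimension one face is a face with $d$ elements. $X$ is stacked if it is pure of some dimension $d$ and its facets can be ordered $F_0,F_1,\dots,F_k$ (a stacking order) such that for each $p\ge 1$, $F_p$ contains exactly one vertex $v_p$ not in $F_0\cup\dots\cup F_{p-1}$ (called the free vertex of $F_p$), and $F_p\setminus\{v_p\}\subseteq F_j$ for some $j<p$. A walk is a sequence of facets $f_1,\dots,f_p$ ($p\ge 1$) such that each $f_i\cap f_{i+1}$ has exactly $d$ elements; a path is a walk in which the faces $f_i\cap f_{i+1}$, $1\le i<p$, are pairwise distinct. For faces $h,k$ such that $h\cup k$ is not contained in any codimension one face, a path between $h$ and $k$, written $h\,|\,f_1,\dots,f_p\,|\,k$, is a path $f_1,\dots,f_p$ with $h\subseteq f_1$, $k\subseteq f_p$, and, if $p\ge 2$, $h\not\subseteq f_1\cap f_2$ and $k\not\subseteq f_p\cap f_{p-1}$. For a vertex $v$ one writes $v$ for $\{v\}$. *)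

From mathcomp Require Import all_boot.
Set Implicit Arguments. Unset Strict Implicit. Unset Printing Implicit Defensive.

Section SC.
Variable V : finType.

Definition is_complex (X : {set {set V}}) : Prop :=
  (forall F G : {set V}, F \in X -> G \subset F -> G \in X) /\
  (forall v : V, exists2 F, F \in X & v \in F).

Definition facet (X : {set {set V}}) (F : {set V}) : Prop :=
  F \in X /\ (forall G, G \in X -> F \subset G -> G = F).

Definition pure (X : {set {set V}}) (d : nat) : Prop :=
  forall F, facet X F -> #|F| = d.+1.

Definition codim1_face (X : {set {set V}}) (d : nat) (c : {set V}) : Prop :=
  c \in X /\ #|c| = d.

Definition stacking_order (X : {set {set V}}) (s : seq {set V}) : Prop :=
  s != [::] /\ uniq s /\ (forall F, F \in s <-> facet X F) /\
  forall p, 0 < p < size s ->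
    exists v : V,
      [set x in nth set0 s p | x \notin \bigcup_(j < p) nth set0 s j] = [set v] /\
      exists2 j, j < p & nth set0 s p :\ v \subset nth set0 s j.

Definition stacked (X : {set {set V}}) (d : nat) : Prop :=
  is_complex X /\ pure X d /\ exists s, stacking_order X s.

Definition sc_walk (X : {set {set V}}) (d : nat) (f : seq {set V}) : Prop :=
  f != [::] /\ (forall F, F \in f -> facet X F) /\
  forall i, i.+1 < size f -> #|nth set0 f i :&: nth set0 f i.+1| = d.

Definition consec_inters (f : seq {set V}) : seq {set V} :=
  mkseq (fun i => nth set0 f i :&: nth set0 f i.+1) (size f).-1.

Definition sc_path (X : {set {set V}}) (d : nat) (f : seq {set V}) : Prop :=
  sc_walk X d f /\ uniq (consec_inters f).

Definition path_between (X : {set {set V}}) (d : nat) (h k : {set V})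
    (f : seq {set V}) : Prop :=
  sc_path X d f /\ h \subset nth set0 f 0 /\ k \subset nth set0 f (size f).-1 /\
  (1 < size f ->
     ~~ (h \subset nth set0 f 0 :&: nth set0 f 1) /\
     ~~ (k \subset nth set0 f (size f).-1 :&: nth set0 f (size f).-2)).

End SC.

From mathcomp Require Import all_boot.
From mathcomp Require Import zify.
Set Implicit Arguments. Unset Strict Implicit. Unset Printing Implicit Defensive.

(* Rank the facets of the path by their position in the stacking order.  Every
   facet B meets all of its earlier neighbours in the same codimension one face,
   namely B minus its free vertex.  Hence a rank that goes up and then down again
   along the path would repeat a crossing face, so the ranks first decrease and
   then increase.  Peeling off whichever end of a subpath has the larger rank then
   shows that a set contained in two facets of the path is contained in every
   facet between them; applied to h, f_1 and f_(i+1) (and to k, f_i and f_p) this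
   gives the claim from the defining conditions at the ends of the path. *)

Section ValleySequence.
Variables (r : nat -> nat) (n : nat).
Hypothesis step_neq : forall j, j.+1 < n -> r j != r j.+1.
Hypothesis ascent_step : forall j, j.+2 < n -> r j < r j.+1 -> r j.+1 < r j.+2.

Lemma ascent_persists j l : j <= l -> l.+1 < n -> r j < r j.+1 -> r l < r l.+1.
Proof.
elim: l => [|l IH] jl ln asc; first by have -> : 0 = j by lia.
case: (ltnP j l.+1) => [jl'|lj]; last by have -> : l.+1 = j by lia.
by apply: ascent_step (IH _ _ asc); lia.
Qed.

Lemma ascent_forward a b : a < b -> b < n -> r a < r a.+1 -> r a < r b.
Proof.
elim: b => [//|b IH] ab bn asc.
case: (ltnP a b) => [lt_ab|ba]; last by have -> : b = a by lia.
have := ascent_persists (ltnW lt_ab) bn asc; have := IH lt_ab (ltnW bn) asc; lia.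
Qed.

Lemma descent_backward a b : a <= b -> b.+1 < n -> r b.+1 < r b -> r b.+1 < r a.
Proof.
elim: b => [|b IH] ab bn desc; first by have -> : a = 0 by lia.
case: (leqP a b) => [le_ab|ba]; last by have -> : a = b.+1 by lia.
have desc_b : r b.+1 < r b.
  have := step_neq (ltnW bn); case: ltngtP => // asc _.
  by have := ascent_step bn asc; lia.
have := IH le_ab (ltnW bn) desc_b; lia.
Qed.

Lemma first_step_descends a b : a < b -> b < n -> r b <= r a -> r a.+1 < r a.
Proof.
move=> ab bn ba; have := step_neq (leq_ltn_trans ab bn).
case: ltngtP => // asc _; have := ascent_forward ab bn asc; lia.
Qed.

Lemma last_step_ascends a b : a <= b -> b.+1 < n -> r a <= r b.+1 -> r b < r b.+1.
Proof.
move=> ab bn ab_le; have := step_neq bn.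
case: ltngtP => // desc _; have := descent_backward ab bn desc; lia.
Qed.

End ValleySequence.

Section Stacking.
Variables (V : finType) (s : seq {set V}) (d : nat).
Hypothesis card_facet : forall F, F \in s -> #|F| = d.+1.
Hypothesis new_vertex : forall p, 0 < p < size s ->
  exists2 v, v \in nth set0 s p & forall j, j < p -> v \notin nth set0 s j.

Lemma earlier_meet A B : A \in s -> B \in s -> index A s < index B s ->
  #|A :&: B| = d ->
  exists2 v, A :&: B = B :\ v &
    forall A', A' \in s -> index A' s < index B s -> v \notin A'.
Proof.
move=> As Bs AB cAB.
have [v vB v_new] : exists2 v, v \in B &
    forall A', A' \in s -> index A' s < index B s -> v \notin A'.
  have [|v] := new_vertex (p := index B s); first by rewrite index_mem Bs; lia.
  rewrite nth_index // => vB v_new; exists v => // A' A's.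
  by move=> /v_new; rewrite nth_index.
have cBv : #|B :\ v| = d by have := cardsD1 v B; rewrite vB card_facet //; lia.
exists v => //; apply/eqP; rewrite eqEcard cAB cBv leqnn andbT.
apply/subsetP => x /setIP [xA xB].
by rewrite in_setD1 xB andbT; apply: contraTneq xA => ->; apply: v_new.
Qed.

Lemma earlier_meet_sub A A' B : A \in s -> A' \in s -> B \in s ->
  index A s < index B s -> index A' s < index B s -> #|A :&: B| = d ->
  A' :&: B \subset A.
Proof.
move=> As A's Bs AB A'B cAB; have [v eAB v_new] := earlier_meet As Bs AB cAB.
apply/subsetP => x /setIP [xA' xB].
have : x \in A :&: B.
  by rewrite eAB in_setD1 xB andbT; apply: contraTneq xA' => ->; apply: v_new.
by case/setIP.
Qed.

Lemma earlier_meet_eq A C B : A \in s -> C \in s -> B \in s ->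
  index A s < index B s -> index C s < index B s ->
  #|A :&: B| = d -> #|C :&: B| = d -> A :&: B = C :&: B.
Proof.
move=> As Cs Bs AB CB cAB cCB.
apply/eqP; rewrite eqEcard cAB cCB leqnn andbT subsetI subsetIr andbT.
exact: earlier_meet_sub.
Qed.

Section Walk.
Variables (g : nat -> {set V}) (n : nat).
Hypothesis walk_in : forall j, j < n -> g j \in s.
Hypothesis walk_meet : forall j, j.+1 < n -> #|g j :&: g j.+1| = d.
Hypothesis walk_meet_uniq : forall j l, j < l -> l.+1 < n ->
  g j :&: g j.+1 != g l :&: g l.+1.

Let r j := index (g j) s.

Lemma walk_rank_eq j l : j < n -> l < n -> r j = r l -> g j = g l.
Proof.
move=> jn ln e; rewrite /r in e.
by rewrite -(nth_index set0 (walk_in jn)) -(nth_index set0 (walk_in ln)) e.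
Qed.

Lemma walk_rank_step_neq j : j.+1 < n -> r j != r j.+1.
Proof.
move=> jn; apply/eqP => /(walk_rank_eq (ltnW jn) jn) e.
by have := walk_meet jn; rewrite e setIid card_facet ?walk_in //; lia.
Qed.

Lemma walk_rank_ascent_step j : j.+2 < n -> r j < r j.+1 -> r j.+1 < r j.+2.
Proof.
move=> jn asc; have := walk_rank_step_neq jn; case: ltngtP => // desc _.
have j1n : j.+1 < n by lia.
have := earlier_meet_eq (walk_in (ltnW j1n)) (walk_in jn) (walk_in j1n) asc desc.
rewrite walk_meet // setIC walk_meet // => /(_ erefl erefl) e.
by have := walk_meet_uniq (ltnSn j) jn; rewrite e setIC eqxx.
Qed.

Lemma walk_rank_inj a b : a < b -> b < n -> r a != r b.
Proof.
move=> ab bn; apply/eqP => e.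
have desc := first_step_descends walk_rank_step_neq walk_rank_ascent_step ab bn
  (eq_leq (esym e)).
have [b' eb] : exists b', b = b'.+1 by exists b.-1; lia.
subst b; case: (ltnP a b') => [ab'|b'a]; last first.
  have eb' : b' = a by lia.
  by move: desc; rewrite e eb' ltnn.
have asc := last_step_ascends walk_rank_step_neq walk_rank_ascent_step
  (ltnW ab') bn (eq_leq e).
have an : a.+1 < n by lia.
have ga : g a = g b'.+1 := walk_rank_eq (ltnW an) bn e.
have meet_a : #|g a.+1 :&: g a| = d by rewrite setIC walk_meet.
have meet_b' : #|g b' :&: g a| = d by rewrite ga walk_meet.
have asc' : r b' < index (g a) s by rewrite ga.
have := earlier_meet_eq (walk_in an) (walk_in (ltnW bn)) (walk_in (ltnW an))
  desc asc' meet_a meet_b'.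
rewrite setIC {2}ga => eq_meet.
by have := walk_meet_uniq ab' bn; rewrite eq_meet eqxx.
Qed.

Lemma walk_convex (h : {set V}) a b j : a <= j <= b -> b < n ->
  h \subset g a -> h \subset g b -> h \subset g j.
Proof.
move Em : (b - a) => m; elim: m a b Em => [|m IH] a b Em /andP [aj jb] bn ha hb.
  by have -> : j = a by lia.
have ab : a < b by lia.
have an : a < n by lia.
case: (ltngtP (r a) (r b)) => [lt_ab|lt_ba|eq_ab].
- have [b' eb] : exists b', b = b'.+1 by exists b.-1; lia.
  subst b; have ab' : a <= b' by lia.
  have asc := last_step_ascends walk_rank_step_neq walk_rank_ascent_step
    ab' bn (ltnW lt_ab).
  have hb' : h \subset g b'.
    apply: subset_trans (earlier_meet_sub (walk_in (ltnW bn)) (walk_in an)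
      (walk_in bn) asc lt_ab (walk_meet bn)).
    by rewrite subsetI ha hb.
  case: (ltnP j b'.+1) => jb'; last by have -> : j = b'.+1 by lia.
  by apply: (IH a b') => //; lia.
- have desc := first_step_descends walk_rank_step_neq walk_rank_ascent_step
    ab bn (ltnW lt_ba).
  have a1n : a.+1 < n by lia.
  have ha1 : h \subset g a.+1.
    apply: subset_trans (earlier_meet_sub (walk_in a1n) (walk_in bn) (walk_in an)
      desc lt_ba _); last by rewrite setIC walk_meet.
    by rewrite subsetI ha hb.
  case: (leqP j a) => ja; first by have -> : j = a by lia.
  by apply: (IH a.+1 b) => //; lia.
- by have := walk_rank_inj ab bn; rewrite eq_ab eqxx.
Qed.

End Walk.
End Stacking.

Lemma consec_inters_uniq (V : finType) (f : seq {set V}) j l :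
  uniq (consec_inters f) -> j < l -> l.+1 < size f ->
  nth set0 f j :&: nth set0 f j.+1 != nth set0 f l :&: nth set0 f l.+1.
Proof.
move=> uniq_f jl lf; have := @nth_uniq _ set0 (consec_inters f) j l.
rewrite /consec_inters size_mkseq !nth_mkseq; try lia.
by move=> /(_ _ _ uniq_f) ->; lia.
Qed.

Lemma stacking_order_new_vertex (V : finType) (X : {set {set V}})
    (s : seq {set V}) :
  stacking_order X s -> forall p, 0 < p < size s ->
  exists2 v, v \in nth set0 s p & forall j, j < p -> v \notin nth set0 s j.
Proof.
move=> [_ [_ [_ stacking_s]]] p /stacking_s [v [free_v _]].
have : v \in [set v] by rewrite in_set1.
rewrite -free_v inE => /andP [v_p v_old]; exists v => // j jp.
by apply: contra v_old => v_j; apply/bigcupP; exists (Ordinal jp).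
Qed.

Theorem lemma2p8 (V : finType) (X : {set {set V}}) (d : nat)
    (h k : {set V}) (f : seq {set V}) :
  stacked X d ->
  h \in X -> k \in X ->
  (forall c, codim1_face X d c -> ~~ (h :|: k \subset c)) ->
  path_between X d h k f ->
  forall i, i.+1 < size f ->
    ~~ (h \subset nth set0 f i :&: nth set0 f i.+1) /\
    ~~ (k \subset nth set0 f i :&: nth set0 f i.+1).
Proof.
move=> [_ [pure_X [s order_s]]] _ _ _.
move=> [[[_ [facet_f meet_f]] uniq_f] [h_first [k_last ends]]] i lt_i.
have [_ [_ [facet_s _]]] := order_s.
have card_s F : F \in s -> #|F| = d.+1 by move/facet_s/pure_X.
have f_in j : j < size f -> nth set0 f j \in s.
  by move=> jf; apply/facet_s/facet_f/mem_nth.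
have convex := walk_convex card_s (stacking_order_new_vertex order_s) f_in
  meet_f (fun j l => consec_inters_uniq uniq_f).
have [h_end k_end] := ends (leq_ltn_trans (ltn0Sn i) lt_i).
split.
- apply: contra h_end => h_i; rewrite subsetI h_first.
  by apply: (convex _ 0 i.+1) => //; exact: subset_trans h_i (subsetIr _ _).
- apply: contra k_end => k_i; rewrite subsetI k_last.
  apply: (convex _ i (size f).-1 _ _ _ (subset_trans k_i (subsetIl _ _)) k_last).
  all: lia.
Qed.
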